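(* Let $R$ be a ring with unity and involution $*$, and let $a,b,c\in R$. The following statements are equivalent. (1) $a$ is left dual $(b,c)$-core invertible. (2) $b\in b(cab)^*R$. (3) $b\in Rcab\cap bb^*R$. (4) There exists some $x\in Rc$ such that $b(xab)^n=b$ and $((xab)^n)^*=(xab)^n$ for every positive integer $n$. (5) There exists some $x\in Rc$ such that $b(xab)^n=b$ and $((xab)^n)^*=(xab)^n$ for some positive integer $n$.
   Context: An element $a\in R$ is called left dual $(b,c)$-core invertible if there exists $x\in Rc$ such that $bxab=b$ and $(xab)^*=xab$; such an $x$ is called a left dual $(b,c)$-core inverse of $a$. *)

From mathcomp Require Import all_boot all_algebra.
Set Implicit Arguments. Unset Strict Implicit. Unset Printing Implicit Defensive.
Import GRing.Theory.
Local Open Scope ring_scope.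

Definition is_involution (R : nzRingType) (s : R -> R) : Prop :=
  [/\ forall x y : R, s (x + y) = s x + s y,
      forall x y : R, s (x * y) = s y * s x
    & forall x : R, s (s x) = x].

Definition left_dual_bc_core_inverse (R : nzRingType) (s : R -> R) (a b c x : R) : Prop :=
  (exists r : R, x = r * c) /\ b * x * a * b = b /\ s (x * a * b) = x * a * b.

Definition left_dual_bc_core_invertible (R : nzRingType) (s : R -> R) (a b c : R) : Prop :=
  exists x : R, left_dual_bc_core_inverse s a b c x.

From mathcomp Require Import all_boot all_algebra.
Set Implicit Arguments. Unset Strict Implicit. Unset Printing Implicit Defensive.
Import GRing.Theory.
Local Open Scope ring_scope.

(* For a left dual (b,c)-core inverse x, the element e = xab is a hermitian
   idempotent with be = b; hence so are all its powers, and conversely a power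
   e^n with these properties gives the inverse e^(n-1) x.  Applying the
   involution to b = be, with e = r c a b, gives b in b(cab)^*R; conversely if
   b = bu with u = (cab)^* r in b^*R, then b^* = u^* b^* forces u = u^* u,
   so u is hermitian and x = r^* c works, since xab = u^*.  Condition (3) is
   (2) read through (cab)^* = b^* (ca)^* and, backwards, b = tcab. *)

Lemma idem_of_mulr_id (R : nzRingType) (y b : R) :
  b * (y * b) = b -> y * b * (y * b) = y * b.
Proof. by move=> byb; rewrite -mulrA byb. Qed.

Lemma expr_idem (R : nzRingType) (e : R) n : e * e = e -> e ^+ n.+1 = e.
Proof. by move=> ee; elim: n => [|n IHn]; rewrite ?expr1 // exprS IHn ee. Qed.

Section Involution.
Variables (R : nzRingType) (s : R -> R).
Hypothesis hs : is_involution s.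

Lemma involutionM x y : s (x * y) = s y * s x.
Proof. by case: hs. Qed.

Lemma involutionK x : s (s x) = x.
Proof. by case: hs. Qed.

Lemma herm_of_invMl_id u : s u * u = u -> s u = u.
Proof. by move=> uu; rewrite -{1}uu involutionM involutionK. Qed.

Lemma herm_of_mulr_id_adj b t : b * (s b * t) = b -> s (s b * t) = s b * t.
Proof.
move=> bu; set u := s b * t in bu *; apply: herm_of_invMl_id.
have sb : s b = s u * s b by rewrite -involutionM bu.
by rewrite {3}/u {1}sb -mulrA.
Qed.

Variables a b c : R.

Lemma left_dual_core_invertible_adj :
  left_dual_bc_core_invertible s a b c -> exists r : R, b = b * s (c * a * b) * r.
Proof.
case=> x [[r ->] [bxab sxab]]; exists (s r); rewrite mulrA in bxab.
by rewrite -mulrA -involutionM !mulrA sxab !mulrA bxab.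
Qed.

Lemma left_dual_core_invertible_of_adj :
  (exists r : R, b = b * s (c * a * b) * r) -> left_dual_bc_core_invertible s a b c.
Proof.
case=> r bE; exists (s r * c); split; first by exists (s r).
pose u := s (c * a * b) * r.
have uE : u = s b * (s (c * a) * r) by rewrite /u involutionM mulrA.
have bu : b * u = b by rewrite /u mulrA -bE.
have su : s u = u by rewrite uE herm_of_mulr_id_adj // -uE.
have xab : s r * c * a * b = s u by rewrite /u involutionM involutionK !mulrA.
have -> : b * (s r * c) * a * b = b * (s r * c * a * b) by rewrite !mulrA.
by rewrite xab su bu.
Qed.

Lemma left_dual_core_invertible_mem_Rcab :
  left_dual_bc_core_invertible s a b c -> exists r : R, b = r * c * a * b.
Proof.
by case=> x [[r ->] [bxab _]]; exists (b * r); rewrite !mulrA in bxab *.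
Qed.

Lemma adj_mem_bbadj :
  (exists r : R, b = b * s (c * a * b) * r) -> exists r : R, b = b * s b * r.
Proof.
by case=> r bE; exists (s (c * a) * r); rewrite {1}bE involutionM !mulrA.
Qed.

Lemma adj_of_mem_Rcab_bbadj :
  (exists r : R, b = r * c * a * b) -> (exists r : R, b = b * s b * r) ->
  exists r : R, b = b * s (c * a * b) * r.
Proof.
case=> t bE [w bbE]; exists (s t * w).
have sbE : s b = s (c * a * b) * s t by rewrite {1}bE -!mulrA involutionM !mulrA.
by rewrite {1}bbE sbE !mulrA.
Qed.

Lemma left_dual_core_inverse_expr x :
  left_dual_bc_core_inverse s a b c x -> forall n, (0 < n)%N ->
  b * (x * a * b) ^+ n = b /\ s ((x * a * b) ^+ n) = (x * a * b) ^+ n.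
Proof.
case=> _ [bxab sxab] [|n] // _.
have be : b * (x * a * b) = b by rewrite !mulrA.
by rewrite expr_idem ?idem_of_mulr_id.
Qed.

Lemma left_dual_core_inverse_of_expr x n :
  (exists r : R, x = r * c) -> (0 < n)%N ->
  b * (x * a * b) ^+ n = b -> s ((x * a * b) ^+ n) = (x * a * b) ^+ n ->
  left_dual_bc_core_inverse s a b c ((x * a * b) ^+ n.-1 * x).
Proof.
case=> r xE n_gt0 be se; split; first by exists ((x * a * b) ^+ n.-1 * r); rewrite xE mulrA.
have eE : (x * a * b) ^+ n.-1 * x * a * b = (x * a * b) ^+ n.
  by rewrite -{2}(prednK n_gt0) exprSr !mulrA.
have -> : b * ((x * a * b) ^+ n.-1 * x) * a * b = b * ((x * a * b) ^+ n.-1 * x * a * b).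
  by rewrite !mulrA.
by rewrite eE be se.
Qed.

End Involution.

Theorem theorem2p4 (R : nzRingType) (s : R -> R) (hs : is_involution s) (a b c : R) :
  [<->
    (* (1) *) left_dual_bc_core_invertible s a b c;
    (* (2) b ∈ b (cab)^* R *) (exists r : R, b = b * s (c * a * b) * r);
    (* (3) b ∈ Rcab ∩ bb^*R *)
      ((exists r : R, b = r * c * a * b) /\ (exists r : R, b = b * s b * r));
    (* (4) *)
      (exists x : R, (exists r : R, x = r * c) /\
         forall n : nat, (0 < n)%N ->
           b * (x * a * b) ^+ n = b /\ s ((x * a * b) ^+ n) = (x * a * b) ^+ n);
    (* (5) *)
      (exists x : R, (exists r : R, x = r * c) /\
         exists n : nat, (0 < n)%N /\
           b * (x * a * b) ^+ n = b /\ s ((x * a * b) ^+ n) = (x * a * b) ^+ n)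
  ].
Proof.
tfae.
- exact: (left_dual_core_invertible_adj hs).
- move=> adj; split; last exact: (adj_mem_bbadj hs adj).
  exact: (left_dual_core_invertible_mem_Rcab (left_dual_core_invertible_of_adj hs adj)).
- case=> Rcab bbadj.
  have [x inv_x] := left_dual_core_invertible_of_adj hs (adj_of_mem_Rcab_bbadj hs Rcab bbadj).
  exists x; split; first by case: inv_x.
  exact: left_dual_core_inverse_expr inv_x.
- case=> x [xRc expr_x]; exists x; split=> //.
  by exists 1%N; split; last exact: expr_x.
- case=> x [xRc [n [n_gt0 [be se]]]].
  by exists ((x * a * b) ^+ n.-1 * x); exact: (left_dual_core_inverse_of_expr xRc n_gt0 be se).
Qed.
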